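(* Let $K=\mathbb C$, $m=n=2$ (hence $p=2$), let $c\ge1$ and $d\ge 2$ be integers, and let $B=\begin{pmatrix}0&-c\\ d&0\end{pmatrix}$. Then for any pair $\mathbf x=(x_1,x_2)$ of algebraically independent elements of $\mathbb C(X_1,X_2)$, the cluster algebra $\mathcal A(\mathbf x,B)$ is not factorial.
   Context: Let $\mathcal F=\mathbb C(X_1,X_2)$. For $B\in M_{2,2}(\mathbb Z)$ as given and $\mathbf x=(x_1,x_2)$ algebraically independent over $\mathbb C$, $(\mathbf x,B)$ is a seed. For $k\in\{1,2\}$ the mutation $\mu_k(\mathbf x,B)=(\mathbf x',B')$ is given by $b'_{ij}=-b_{ij}$ if $i=k$ or $j=k$, and $b'_{ij}=b_{ij}+\frac{|b_{ik}|b_{kj}+b_{ik}|b_{kj}|}{2}$ otherwise; $x'_s=x_s$ for $s\neq k$ and $x'_k=x_k^{-1}\big(\prod_{b_{ik}>0}x_i^{b_{ik}}+\prod_{b_{ik}<0}x_i^{-b_{ik}}\big)$. The cluster algebra $\mathcal A(\mathbf x,B)$ is the $\mathbb C$-subalgebra of $\mathcal F$ generated by all entries $y_1,y_2$ of all seeds $(\mathbf y,C)$ obtained from $(\mathbf x,B)$ by finite sequences of mutations. *)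

From HB Require Import structures.
From mathcomp Require Import all_boot all_order all_algebra.
From mathcomp Require Import complex fraction intdiv.
From mathcomp Require Import Rstruct.
From Stdlib Require Import Rdefinitions.

Set Implicit Arguments.
Unset Strict Implicit.
Unset Printing Implicit Defensive.

Import Order.TTheory GRing.Theory Num.Theory.
Local Open Scope ring_scope.

Definition CC : Type := (Rdefinitions.R)[i].

Definition FF : Type := {fraction {poly {poly CC}}}.

Definition cst (c : CC) : FF := @FracField.tofrac {poly {poly CC}} (c%:P%:P).

Definition eval2 (P : {poly {poly CC}}) (a b : FF) : FF :=
  (map_poly (fun q : {poly CC} => (map_poly cst q).[a]) P).[b].

Definition alg_indep (x : 'I_2 -> FF) : Prop :=
  forall P : {poly {poly CC}}, P != 0 -> eval2 P (x ord0) (x ord_max) != 0.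

Definition seed : Type := ('I_2 -> FF) * 'M[int]_2.

Definition mut_mx (k : 'I_2) (B : 'M[int]_2) : 'M[int]_2 :=
  \matrix_(i < 2, j < 2)
    if (i == k) || (j == k) then - B i j
    else B i j + divz ((absz (B i k))%:Z * B k j + B i k * (absz (B k j))%:Z) 2.

Definition mut_cl (k : 'I_2) (x : 'I_2 -> FF) (B : 'M[int]_2) : 'I_2 -> FF :=
  fun s => if s == k then
    (x k)^-1 * (\prod_(i < 2 | 0 < B i k) x i ^+ absz (B i k)
                + \prod_(i < 2 | B i k < 0) x i ^+ absz (B i k))
  else x s.

Definition mutate (k : 'I_2) (S : seed) : seed :=
  (mut_cl k S.1 S.2, mut_mx k S.2).

Definition mutseq (ks : seq 'I_2) (S : seed) : seed :=
  foldl (fun S k => mutate k S) S ks.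

Definition cluster_var (x : 'I_2 -> FF) (B : 'M[int]_2) (y : FF) : Prop :=
  exists (ks : seq 'I_2) (i : 'I_2), y = (mutseq ks (x, B)).1 i.

Inductive gen_alg (G : FF -> Prop) : FF -> Prop :=
  | ga_cst c : gen_alg G (cst c)
  | ga_gen y : G y -> gen_alg G y
  | ga_add y z : gen_alg G y -> gen_alg G z -> gen_alg G (y + z)
  | ga_mul y z : gen_alg G y -> gen_alg G z -> gen_alg G (y * z).

Definition cluster_alg (x : 'I_2 -> FF) (B : 'M[int]_2) : FF -> Prop :=
  gen_alg (cluster_var x B).

Definition unitA (A : FF -> Prop) (a : FF) : Prop :=
  A a /\ exists b, A b /\ a * b = 1.

Definition irredA (A : FF -> Prop) (a : FF) : Prop :=
  [/\ A a, a != 0, ~ unitA A a &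
      forall b c, A b -> A c -> a = b * c -> unitA A b \/ unitA A c].

Definition assocA (A : FF -> Prop) (a b : FF) : Prop :=
  exists u, unitA A u /\ a = u * b.

Definition factorial_ring (A : FF -> Prop) : Prop :=
  (forall a, A a -> a != 0 -> ~ unitA A a ->
     exists s : seq FF, (forall y, y \in s -> irredA A y) /\ a = \prod_(y <- s) y)
  /\
  (forall s t : seq FF,
     (forall y, y \in s -> irredA A y) -> (forall y, y \in t -> irredA A y) ->
     \prod_(y <- s) y = \prod_(y <- t) y ->
     exists t' : seq FF, [/\ perm_eq t t', size s = size t' &
        forall i : nat, leq i.+1 (size s) -> assocA A (nth 0 s i) (nth 0 t' i)]).

Definition Bcd (c d : nat) : 'M[int]_2 :=
  \matrix_(i < 2, j < 2)
    if (i == ord0) && (j == ord_max) then - (c%:Z)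
    else if (i == ord_max) && (j == ord0) then d%:Z else 0.

(* Every cluster variable is a term of the exchange sequence
   u(n-1) u(n+1) = u(n)^e(n) + 1, with e alternating between d and c, through
   x1, x2, read in both directions.  Call specialization a partial ring morphism
   of C(X1, X2) into a field that inverts the elements of nonzero value.  The
   exchange relations, together with a Laurent-type identity for the case where a
   term takes the value 0, show that a specialization defined at x1, x2, x1', x2'
   is defined on the whole cluster algebra A.
   Now x1 x1' = x2^d + 1 = (x2 - z0) q(x2) where z0 is a simple root of X^d + 1.
   If A were factorial, an irreducible factor k of the nonunit x1 would be prime,
   hence divide x2 - z0 or q(x2).  Specializing at the points of the torus shows
   that k has neither zeros nor poles there, so k is a Laurent monomial
   l x1^I x2^J.  Specializing along the curve x1 = x2^d + 1, on which x1' = 1, at a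
   point where x1 = 0, and along x2 = x1^c + 1, on which x2' = 1, at a point where
   x2 = 0, forces I = J = 0.  So k is a nonzero constant, hence a unit. *)

From HB Require Import structures.
From mathcomp Require Import all_boot all_order all_algebra.
From mathcomp Require Import complex fraction intdiv.
From mathcomp Require Import Rstruct.
From mathcomp Require Import ring.
From Stdlib Require Classical_Prop.

Set Implicit Arguments.
Unset Strict Implicit.
Unset Printing Implicit Defensive.

Import Order.TTheory GRing.Theory Num.Theory.
Local Open Scope ring_scope.

(** * Specializations *)

Definition cstm : {rmorphism CC -> FF} := (@tofrac _) \o polyC \o polyC.

Lemma cstmE c : cstm c = cst c. Proof. by []. Qed.

Section Specialization.
Variables (K : fieldType) (iota : {rmorphism CC -> K}).

(* A partial ring morphism [C(X1, X2) -> K] over [iota], given by its graph [V]: its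
   domain contains the constants, is closed under [+] and [*], and contains the
   inverse of every element of nonzero value. *)
Record specialization (V : FF -> K -> Prop) : Prop := Specialization {
  spec_fun : forall f v w, V f v -> V f w -> v = w;
  spec_cst : forall c, V (cst c) (iota c);
  spec_add : forall f g v w, V f v -> V g w -> V (f + g) (v + w);
  spec_mul : forall f g v w, V f v -> V g w -> V (f * g) (v * w);
  spec_inv : forall f v, V f v -> v != 0 -> V f^-1 v^-1 }.

Definition defined (V : FF -> K -> Prop) (f : FF) := exists v, V f v.

Variables (V : FF -> K -> Prop) (hV : specialization V).

Lemma spec1 : V 1 1.
Proof. by have := spec_cst hV 1; rewrite -cstmE !rmorph1. Qed.

Lemma spec0 : V 0 0.
Proof. by have := spec_cst hV 0; rewrite -cstmE !rmorph0. Qed.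

Lemma spec_neq0 f v : V f v -> v != 0 -> f != 0.
Proof.
move=> Vf; apply: contraNneq => f0.
by apply/eqP; apply: (spec_fun hV Vf); rewrite f0; apply: spec0.
Qed.

Lemma spec_exp f v n : V f v -> V (f ^+ n) (v ^+ n).
Proof.
move=> Vf; elim: n => [|n IHn]; first by rewrite !expr0; apply: spec1.
by rewrite !exprS; apply: (spec_mul hV).
Qed.

Lemma spec_horner (p : {poly CC}) y v :
  V y v -> V (map_poly cstm p).[y] (map_poly iota p).[v].
Proof.
move=> Vy; elim/poly_ind: p => [|p c IHp].
  by rewrite !rmorph0 !horner0; apply: spec0.
rewrite !rmorphD !rmorphM /= !map_polyX !map_polyC !hornerE.
by apply: (spec_add hV); [apply: (spec_mul hV) | apply: (spec_cst hV)].
Qed.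

Lemma defined_add f g : defined V f -> defined V g -> defined V (f + g).
Proof. by move=> [v Vf] [w Vg]; exists (v + w); apply: spec_add. Qed.

Lemma defined_mul f g : defined V f -> defined V g -> defined V (f * g).
Proof. by move=> [v Vf] [w Vg]; exists (v * w); apply: spec_mul. Qed.

Lemma defined_exp f n : defined V f -> defined V (f ^+ n).
Proof. by move=> [v Vf]; exists (v ^+ n); apply: spec_exp. Qed.

Lemma defined_cst c : defined V (cst c).
Proof. by exists (iota c); apply: (spec_cst hV). Qed.

Lemma defined1 : defined V 1.
Proof. by exists 1; apply: spec1. Qed.

Lemma defined_inv f v : V f v -> v != 0 -> defined V f^-1.
Proof. by move=> Vf v0; exists v^-1; apply: (spec_inv hV). Qed.

Lemma defined_sum n (F : 'I_n -> FF) :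
  (forall i, defined V (F i)) -> defined V (\sum_(i < n) F i).
Proof.
move=> DF; apply: (big_ind (defined V)) => //; last exact: defined_add.
by exists 0; apply: spec0.
Qed.

Lemma spec_expz y v (n : int) : V y v -> v != 0 -> V (y ^ n) (v ^ n).
Proof.
move=> Vy v_neq0; case: n => n; first exact: (spec_exp).
exact: (spec_inv hV (spec_exp n.+1 Vy) (expf_neq0 _ v_neq0)).
Qed.

Lemma spec_monomial_exp0 (k y1 y2 : FF) vk v2 (l : CC) (I J : int) :
  V k vk -> vk != 0 -> V y1 0 -> y1 != 0 -> V y2 v2 -> v2 != 0 -> l != 0 ->
  k = cst l * y1 ^ I * y2 ^ J -> I = 0.
Proof.
move=> Vk vk_neq0 Vy1 y1_neq0 Vy2 v2_neq0 l_neq0; case: I => n kE.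
  have Vmono := spec_mul hV (spec_mul hV (spec_cst hV l) (spec_exp n Vy1))
    (spec_expz J Vy2 v2_neq0).
  have vkE : vk = iota l * 0 ^+ n * v2 ^ J by apply: (spec_fun hV Vk); rewrite kE; exact Vmono.
  by move: vk_neq0; rewrite vkE; case: n {kE Vmono vkE} => [|n] //; rewrite expr0n mulr0 mul0r eqxx.
(* A negative exponent would give the constant [cst l] the value 0. *)
have y2J_neq0 : y2 ^ J != 0 by exact: (expfz_neq0 _ (spec_neq0 Vy2 v2_neq0)).
have lE : cst l = k * y1 ^+ n.+1 * (y2 ^ J)^-1.
  rewrite kE [_ * _ * y1 ^+ _]mulrAC (mulfK y2J_neq0).
  have -> : y1 ^ Negz n = (y1 ^+ n.+1)^-1 by [].
  by rewrite (divfK (expf_neq0 _ y1_neq0)).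
have := spec_mul hV (spec_mul hV Vk (spec_exp n.+1 Vy1))
  (spec_inv hV (spec_expz J Vy2 v2_neq0) _).
rewrite -lE expr0n mulr0 mul0r => /(_ (expfz_neq0 _ v2_neq0)) /(spec_fun hV (spec_cst hV l)).
by move/eqP; rewrite fmorph_eq0 (negPf l_neq0).
Qed.

Lemma spec_exchange1 y y' g n : V y (g ^+ n + 1) -> V y' g -> g ^+ n + 1 != 0 ->
  V (y^-1 * (y' ^+ n + 1)) 1.
Proof.
move=> Vy Vy' g_neq0.
have := spec_mul hV (spec_inv hV Vy g_neq0) (spec_add hV (spec_exp n Vy') (spec1)).
by rewrite mulVf.
Qed.

End Specialization.

Section Horner2.
Variables (K : fieldType) (iota : {rmorphism CC -> K}) (a b : K).

Definition evalY1 : {rmorphism {poly CC} -> K} := horner_eval a \o map_poly iota.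

Definition horner2 : {rmorphism {poly {poly CC}} -> K} :=
  horner_eval b \o map_poly evalY1.

Lemma horner2C c : horner2 c%:P%:P = iota c.
Proof. by rewrite /= map_polyC /horner_eval /= hornerC map_polyC /horner_eval /= hornerC. Qed.

Lemma horner2X : horner2 'X = b.
Proof. by rewrite /= map_polyX /horner_eval /= hornerX. Qed.

Lemma horner2XC : horner2 'X%:P = a.
Proof. by rewrite /= map_polyC /horner_eval /= hornerC map_polyX /horner_eval /= hornerX. Qed.

End Horner2.

Section FracEval.
Variables (x : 'I_2 -> FF) (hx : alg_indep x).
Local Notation x1 := (x ord0).
Local Notation x2 := (x ord_max).
Local Notation Ex := (horner2 cstm x1 x2).

Lemma horner2x_eq0 P : (Ex P == 0) = (P == 0).
Proof.
apply/eqP/eqP => [|->]; last exact: rmorph0.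
by move=> E0; apply/eqP/negPn/negP => /hx; rewrite -[eval2 _ _ _]/(Ex P) E0 eqxx.
Qed.

Variables (K : fieldType) (iota : {rmorphism CC -> K}) (a b : K).
Local Notation Ev := (horner2 iota a b).

Definition frac_eval (f : FF) (v : K) :=
  exists P Q, [/\ Ev Q != 0, f * Ex Q = Ex P & v = Ev P / Ev Q].

Lemma frac_eval_horner2 P : frac_eval (Ex P) (Ev P).
Proof.
exists P, 1; rewrite (rmorph1 Ev) (rmorph1 Ex) (mulr1 (Ex P)) divr1.
by split; first exact: oner_neq0.
Qed.

Lemma frac_eval_x1 : frac_eval x1 a.
Proof. by rewrite -{1}(horner2XC cstm x1 x2) -(horner2XC iota a b); apply: frac_eval_horner2. Qed.

Lemma frac_eval_x2 : frac_eval x2 b.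
Proof. by rewrite -{1}(horner2X cstm x1 x2) -(horner2X iota a b); apply: frac_eval_horner2. Qed.

Lemma frac_eval_spec : specialization iota frac_eval.
Proof.
split.
- move=> f _ _ [P [Q [Q0 fPQ ->]]] [P' [Q' [Q'0 fPQ' ->]]].
  have /eqP PQ : P * Q' - P' * Q == 0.
    by rewrite -horner2x_eq0 rmorphB !rmorphM -fPQ -fPQ'; apply/eqP; ring.
  apply/eqP; rewrite eqr_div //; apply/eqP.
  by rewrite -!rmorphM; apply/eqP; rewrite -subr_eq0 -rmorphB PQ rmorph0.
- move=> c; rewrite -cstmE -(horner2C cstm x1 x2) -(horner2C iota a b).
  exact: frac_eval_horner2.
- move=> f g _ _ [P [Q [Q0 fPQ ->]]] [P' [Q' [Q'0 gPQ ->]]].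
  exists (P * Q' + P' * Q), (Q * Q').
  rewrite !rmorphD !rmorphM mulf_neq0 //; split => //.
    by rewrite -fPQ -gPQ; ring.
  by rewrite addf_div.
- move=> f g _ _ [P [Q [Q0 fPQ ->]]] [P' [Q' [Q'0 gPQ ->]]].
  exists (P * P'), (Q * Q'); rewrite !rmorphM mulf_neq0 //; split => //.
    by rewrite -fPQ -gPQ; ring.
  by rewrite mulf_div.
- move=> f _ [P [Q [Q0 fPQ ->]]]; rewrite mulf_eq0 invr_eq0 (negPf Q0) orbF => P0.
  have f0 : f != 0.
    apply: contraNneq P0 => f0; move: fPQ; rewrite f0 mul0r => /esym/eqP.
    by rewrite horner2x_eq0 => /eqP ->; rewrite rmorph0.
  exists Q, P; rewrite invf_div; split => //.
  by rewrite -fPQ mulrA (mulVf f0) mul1r.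
Qed.

End FracEval.

Section RatfEval.
Variables (F : fieldType) (z : F).

Definition ratf_eval (g : {fraction {poly F}}) (v : F) :=
  exists p q : {poly F}, [/\ q.[z] != 0, g * tofrac q = tofrac p & v = p.[z] / q.[z]].

Lemma ratf_eval_tofrac p : ratf_eval (tofrac p) p.[z].
Proof. by exists p, 1; rewrite tofrac1 mulr1 hornerC divr1 oner_eq0. Qed.

Lemma ratf_eval_fun g v w : ratf_eval g v -> ratf_eval g w -> v = w.
Proof.
move=> [p [q [q0 gpq ->]]] [p' [q' [q'0 gpq' ->]]].
have e : p * q' = p' * q.
  by apply/eqP; rewrite -tofrac_eq !tofracM -gpq -gpq'; apply/eqP; ring.
by apply/eqP; rewrite eqr_div // -!hornerM e.
Qed.

Lemma ratf_eval_add g h v w : ratf_eval g v -> ratf_eval h w -> ratf_eval (g + h) (v + w).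
Proof.
move=> [p [q [q0 gpq ->]]] [p' [q' [q'0 hpq ->]]].
exists (p * q' + p' * q), (q * q'); rewrite hornerD !hornerM; split; first exact: mulf_neq0.
  by rewrite tofracD !tofracM -gpq -hpq; ring.
by rewrite addf_div.
Qed.

Lemma ratf_eval_mul g h v w : ratf_eval g v -> ratf_eval h w -> ratf_eval (g * h) (v * w).
Proof.
move=> [p [q [q0 gpq ->]]] [p' [q' [q'0 hpq ->]]].
exists (p * p'), (q * q'); rewrite !hornerM; split; first exact: mulf_neq0.
  by rewrite !tofracM -gpq -hpq; ring.
by rewrite mulf_div.
Qed.

Lemma ratf_eval_inv g v : ratf_eval g v -> v != 0 -> ratf_eval g^-1 v^-1.
Proof.
move=> [p [q [q0 gpq ->]]]; rewrite mulf_eq0 invr_eq0 (negPf q0) orbF => p0.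
have q_neq0 : q != 0 by apply: contraNneq q0 => ->; rewrite horner0.
have g0 : g != 0.
  apply: contraNneq p0 => g0; move: gpq; rewrite g0 mul0r => /esym/eqP.
  by rewrite tofrac_eq0 => /eqP ->; rewrite horner0.
exists q, p; rewrite invf_div; split => //.
by rewrite -gpq mulrA mulVf ?mul1r.
Qed.

End RatfEval.

Definition polyK : {rmorphism CC -> {fraction {poly CC}}} := (@tofrac _) \o polyC.

Section Composition.
Variables (V : FF -> {fraction {poly CC}} -> Prop) (hV : specialization polyK V) (z : CC).

Definition spec_at (f : FF) (v : CC) := exists g, V f g /\ ratf_eval z g v.

Lemma spec_at_spec : specialization idfun spec_at.
Proof.
split.
- move=> f v w [g [Vg gv]] [g' [Vg' g'w]].
  by move: g'w; rewrite -(spec_fun hV Vg Vg'); apply: ratf_eval_fun.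
- move=> c; exists (polyK c); split; first exact: (spec_cst hV).
  by have := ratf_eval_tofrac z c%:P; rewrite hornerC.
- move=> f h v w [g [Vg gv]] [g' [Vg' g'w]]; exists (g + g').
  by split; [apply: (spec_add hV) | apply: ratf_eval_add].
- move=> f h v w [g [Vg gv]] [g' [Vg' g'w]]; exists (g * g').
  by split; [apply: (spec_mul hV) | apply: ratf_eval_mul].
- move=> f v [g [Vg gv]] v0; exists g^-1; split; last exact: ratf_eval_inv.
  apply: (spec_inv hV) => //; move: gv v0 => [p [q [q0 gpq ->]]].
  rewrite mulf_eq0 invr_eq0 (negPf q0) orbF; apply: contraNneq => g0.
  by move: gpq; rewrite g0 mul0r => /esym/eqP; rewrite tofrac_eq0 => /eqP ->; rewrite horner0.
Qed.

End Composition.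

(** * Exchange sequences *)

Section ExchangeSequence.
Variables (R : fieldType) (e : nat -> nat).

Fixpoint exch_pair (a b : R) (n : nat) : R * R :=
  if n is n'.+1 then
    let: (u, v) := exch_pair a b n' in (v, (v ^+ e n'.+1 + 1) / u)
  else (a, b).

Definition exch_seq a b n := (exch_pair a b n).1.

Lemma exch_seqSS a b n :
  exch_seq a b n.+2 = (exch_seq a b n.+1 ^+ e n.+1 + 1) / exch_seq a b n.
Proof. by rewrite /exch_seq /=; case: (exch_pair a b n). Qed.

Lemma exch_seq_rel a b n : exch_seq a b n != 0 ->
  exch_seq a b n * exch_seq a b n.+2 = exch_seq a b n.+1 ^+ e n.+1 + 1.
Proof. by move=> u0; rewrite exch_seqSS mulrC mulfVK. Qed.

End ExchangeSequence.

Lemma exchange_laurent (R : fieldType) (y0 y1 y2 y3 y4 : R) (e e' : nat) :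
  (0 < e')%N -> y2 != 0 ->
  y0 * y2 = y1 ^+ e + 1 -> y1 * y3 = y2 ^+ e' + 1 -> y2 * y4 = y3 ^+ e + 1 ->
  y4 * y1 ^+ e = y2 ^+ e'.-1 * \sum_(i < e) (y2 ^+ e' + 1) ^+ i + y0.
Proof.
move=> e'_gt0 y2_0 r02 r13 r24; apply: (mulfI y2_0).
have -> : y2 * (y4 * y1 ^+ e) = (y2 ^+ e' + 1) ^+ e + y1 ^+ e.
  by rewrite mulrA r24 mulrDl mul1r -exprMn (mulrC y3) r13.
have y2e' : y2 ^+ e' = y2 * y2 ^+ e'.-1 by rewrite -exprS prednK.
rewrite mulrDr mulrA -y2e' (mulrC y2) r02.
have := subrX1 (y2 ^+ e' + 1) e; rewrite addrK => <-; ring.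
Qed.

Section DefinedExchange.
Variables (K : fieldType) (iota : {rmorphism CC -> K}).
Variables (V : FF -> K -> Prop) (hV : specialization iota V).
Variables (f : nat -> FF) (E : nat -> nat).
Hypotheses (f_neq0 : forall n, f n != 0)
  (f_rel : forall n, f n * f n.+2 = f n.+1 ^+ E n.+1 + 1)
  (E_periodic : forall n, E n.+2 = E n) (E_gt0 : forall n, (0 < E n)%N).

Lemma defined_exchange_step n :
  defined V (f n) -> defined V (f n.+1) -> defined V (f n.+2) -> defined V (f n.+3) ->
  defined V (f n.+4).
Proof.
move=> Df0 [v1 Vf1] [v2 Vf2] Df3.
have r24 : f n.+2 * f n.+4 = f n.+3 ^+ E n.+1 + 1 by rewrite -(E_periodic n.+1) f_rel.
have [v2_0|v2_neq0] := eqVneq v2 0; last first.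
  have -> : f n.+4 = (f n.+2)^-1 * (f n.+3 ^+ E n.+1 + 1) by rewrite -r24 mulKf.
  apply: (defined_mul hV); first exact: (defined_inv hV Vf2 v2_neq0).
  exact: (defined_add hV (defined_exp hV _ Df3) (defined1 hV)).
(* Where [f (n+2)] vanishes, [f (n+1)] does not, and the exchange identity
   writes [f (n+4)] without dividing by [f (n+2)]. *)
have v1_neq0 : v1 != 0.
  have := spec_add hV (spec_exp hV (E n.+2) Vf2) (spec1 hV).
  rewrite -f_rel v2_0 expr0n gtn_eqF // add0r => V13.
  have [v3 Vf3] := Df3; have := spec_fun hV V13 (spec_mul hV Vf1 Vf3).
  by apply: contra_eq_neq => ->; rewrite mul0r oner_neq0.
have := exchange_laurent (E_gt0 n.+2) (f_neq0 n.+2) (f_rel n) (f_rel n.+1) r24.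
move/(congr1 (fun y => y * (f n.+1 ^+ E n.+1)^-1)).
rewrite mulfK ?expf_neq0 ?f_neq0 // => ->.
have Df2 : defined V (f n.+2) by exists v2.
apply: (defined_mul hV); last exact: (defined_inv hV (spec_exp hV _ Vf1) (expf_neq0 _ v1_neq0)).
apply: (defined_add hV) Df0; apply: (defined_mul hV (defined_exp hV _ Df2)).
apply: (defined_sum hV) => i; apply: (defined_exp hV).
exact: (defined_add hV (defined_exp hV _ Df2) (defined1 hV)).
Qed.

Lemma defined_exchange :
  defined V (f 0) -> defined V (f 1) -> defined V (f 2) -> defined V (f 3) ->
  forall n, defined V (f n).
Proof.
move=> D0 D1 D2 D3.
suff D n : [/\ defined V (f n), defined V (f n.+1), defined V (f n.+2) & defined V (f n.+3)].
  by move=> n; case: (D n).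
elim: n => [|n [Dn Dn1 Dn2 Dn3]]; first by split.
by split => //; apply: defined_exchange_step.
Qed.

End DefinedExchange.

(** * Seeds and cluster variables *)

Lemma ord2P (i : 'I_2) : i = ord0 \/ i = ord_max.
Proof. by case: i => [[|[|//]] i2]; [left | right]; apply: val_inj. Qed.

Lemma big_ord2_cond (R : comNzRingType) (P : pred 'I_2) (F : 'I_2 -> R) :
  \prod_(i < 2 | P i) F i =
  (if P ord0 then F ord0 else 1) * (if P ord_max then F ord_max else 1).
Proof.
rewrite big_mkcond /= !big_ord_recl big_ord0 mulr1 /=.
by have -> : lift ord0 ord0 = ord_max :> 'I_2 by apply: val_inj.
Qed.

Section Seeds.
Variables (c d : nat) (c_gt0 : (0 < c)%N) (d_gt0 : (0 < d)%N).
Local Notation B := (Bcd c d).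

Definition Bsign (sg : bool) : 'M[int]_2 := if sg then B else - B.

Lemma Bsign_diag sg : Bsign sg ord0 ord0 = 0 /\ Bsign sg ord_max ord_max = 0.
Proof. by case: sg; rewrite /Bsign !mxE /= ?oppr0. Qed.

Lemma Bsign01 sg : Bsign sg ord0 ord_max = if sg then - c%:Z else c%:Z.
Proof. by case: sg; rewrite /Bsign !mxE /= ?opprK. Qed.

Lemma Bsign10 sg : Bsign sg ord_max ord0 = if sg then d%:Z else - d%:Z.
Proof. by case: sg; rewrite /Bsign !mxE. Qed.

Lemma mut_mx_Bsign k sg : mut_mx k (Bsign sg) = Bsign (~~ sg).
Proof.
apply/matrixP => i j; rewrite /Bsign !mxE.
case: sg; case: (ord2P k) => ->; case: (ord2P i) => ->; case: (ord2P j) => -> /=.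
all: rewrite ?mxE /= ?opprK ?oppr0 ?add0r ?abszN //=.
all: by rewrite ?mulrN ?mulNr ?addNr ?addrN div0z.
Qed.

Lemma mut_cl_Bsign0 (z : 'I_2 -> FF) sg :
  mut_cl ord0 z (Bsign sg) ord0 = (z ord0)^-1 * (z ord_max ^+ d + 1).
Proof.
rewrite /mut_cl eqxx !big_ord2_cond (proj1 (Bsign_diag sg)) Bsign10 ltxx /=.
case: sg; rewrite ?oppr_gt0 ?oppr_lt0 ?ltz_nat d_gt0 ltn0 !mul1r //.
by rewrite abszN addrC.
Qed.

Lemma mut_cl_Bsign1 (z : 'I_2 -> FF) sg :
  mut_cl ord_max z (Bsign sg) ord_max = (z ord_max)^-1 * (z ord0 ^+ c + 1).
Proof.
rewrite /mut_cl eqxx !big_ord2_cond (proj2 (Bsign_diag sg)) Bsign01 ltxx /=.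
case: sg; rewrite ?oppr_gt0 ?oppr_lt0 ?ltz_nat c_gt0 ltn0 !mulr1 //.
by rewrite abszN addrC.
Qed.

Lemma mut_cl_id k (z : 'I_2 -> FF) M s : s != k -> mut_cl k z M s = z s.
Proof. by rewrite /mut_cl => /negPf ->. Qed.

Definition exch_exp (k : nat) := if odd k then d else c.

(* The seeds met along the exchange sequence [u]: at even steps [n] the cluster
   is [(u n, u n.+1)], at odd steps [(u n.+1, u n)], the matrix alternating sign. *)
Definition seed_at (u : nat -> FF) (sg : bool) (S : seed) (n : nat) :=
  if ~~ odd n then [/\ S.2 = Bsign sg, S.1 ord0 = u n & S.1 ord_max = u n.+1]
  else [/\ S.2 = Bsign (~~ sg), S.1 ord0 = u n.+1 & S.1 ord_max = u n].

Section Step.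
Variables (a b : FF).
Local Notation u := (exch_seq exch_exp a b).
Hypothesis u_neq0 : forall n, u n != 0.

Lemma exch_seq_bwd n : u n = (u n.+1 ^+ exch_exp n.+1 + 1) / u n.+2.
Proof. by rewrite -exch_seq_rel // mulfK. Qed.

Lemma seed_at_mutate sg S n k : seed_at u sg S n -> ~ (n = 0%N /\ k = ord_max) ->
  exists m, seed_at u sg (mutate k S) m.
Proof.
rewrite /seed_at /mutate /=; case: (ord2P k) => -> {k}.
- case o: (odd n) => /= -[e2 e0 e1] _.
  + case: n o e0 e1 => [//|m] /= om e0 e1; exists m; rewrite ifT ?om //.
    split; first by rewrite e2 mut_mx_Bsign negbK.
    * by rewrite e2 mut_cl_Bsign0 e0 e1 (exch_seq_bwd m) /exch_exp /= om mulrC.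
    * by rewrite mut_cl_id // e1.
  + exists n.+1; rewrite /= o /=; split; first by rewrite e2 mut_mx_Bsign.
    * by rewrite e2 mut_cl_Bsign0 e0 e1 exch_seqSS /exch_exp /= o mulrC.
    * by rewrite mut_cl_id // e1.
- case o: (odd n) => /= -[e2 e0 e1] n0.
  + exists n.+1; rewrite /= o /=; split; first by rewrite e2 mut_mx_Bsign negbK.
    * by rewrite mut_cl_id // e0.
    * by rewrite e2 mut_cl_Bsign1 e0 e1 exch_seqSS /exch_exp /= o mulrC.
  + case: n o e0 e1 n0 => [|[|m]] //= om e0 e1 n0; first by exfalso; apply: n0.
    exists m.+1; rewrite /= ifF; last by move: om; case: (odd m).
    split; first by rewrite e2 mut_mx_Bsign.
    * by rewrite mut_cl_id // e0.
    * rewrite e2 mut_cl_Bsign1 e0 e1 (exch_seq_bwd m.+1) /exch_exp /=.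
      by move: om; case: (odd m) => //= _; rewrite mulrC.
Qed.

End Step.

Variable x : 'I_2 -> FF.
Local Notation x1 := (x ord0).
Local Notation x2 := (x ord_max).

Definition x1' := x1^-1 * (x2 ^+ d + 1).
Definition x2' := x2^-1 * (x1 ^+ c + 1).

(* The exchange sequence read forwards, [x1, x2, x1', ...], and backwards,
   [x1', x2, x1, x2', ...]. *)
Definition fwd := exch_seq exch_exp x1 x2.
Definition bwd := exch_seq exch_exp x1' x2.

Hypotheses (fwd_neq0 : forall n, fwd n != 0) (bwd_neq0 : forall n, bwd n != 0).

Lemma fwd2 : fwd 2 = x1'.
Proof. by rewrite /fwd exch_seqSS /x1' mulrC. Qed.

Lemma bwd2 : bwd 2 = x1.
Proof.
have : x1' != 0 by have := bwd_neq0 0.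
rewrite /bwd exch_seqSS /x1' mulf_eq0 negb_or => /andP[_ x2d_neq0].
by rewrite invfM invrK mulrCA mulfV ?mulr1.
Qed.

Lemma fwd3 : fwd 3 = (x1' ^+ c + 1) / x2.
Proof. by rewrite /fwd exch_seqSS -/fwd fwd2. Qed.

Lemma bwd3 : bwd 3 = (x1 ^+ c + 1) / x2.
Proof. by rewrite /bwd exch_seqSS -/bwd bwd2. Qed.

Definition reachable (S : seed) :=
  (exists n, seed_at fwd true S n) \/ (exists n, seed_at bwd false S n).

(* Mutating the initial seed at [ord_max] switches between the two readings. *)
Lemma seed_at_turn (u u' : nat -> FF) sg S : seed_at u sg S 0 ->
  u' 2 = u 0 -> u' 3 = (u 0 ^+ c + 1) / u 1 -> seed_at u' (~~ sg) (mutate ord_max S) 2.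
Proof.
move=> [S2 S0 S1] u'2 u'3; split => /=; first by rewrite S2 mut_mx_Bsign.
  by rewrite mut_cl_id // S0.
by rewrite S2 mut_cl_Bsign1 S0 S1 u'3 mulrC.
Qed.

Lemma reachable_mutate S k : reachable S -> reachable (mutate k S).
Proof.
have turn n : (n = 0%N /\ k = ord_max) \/ ~ (n = 0%N /\ k = ord_max).
  by case: n => [|n]; case: (ord2P k) => ->; [right; case | left | right; case | right; case].
case=> -[n]; case: (turn n) => [[-> ->] Sn | nk Sn].
- by right; exists 2%N; apply: (seed_at_turn Sn); rewrite ?bwd2 ?bwd3.
- by left; have [m Sm] := seed_at_mutate fwd_neq0 Sn nk; exists m.
- by left; exists 2%N; apply: (seed_at_turn Sn); rewrite ?fwd2 ?fwd3.
- by right; have [m Sm] := seed_at_mutate bwd_neq0 Sn nk; exists m.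
Qed.

Lemma reachable_mutseq ks : reachable (mutseq ks (x, B)).
Proof.
elim/last_ind: ks => [|ks k IHks]; first by left; exists 0%N.
by rewrite /mutseq foldl_rcons; apply: reachable_mutate.
Qed.

Lemma cluster_var_exch_seq y : cluster_var x B y -> exists n, y = fwd n \/ y = bwd n.
Proof.
move=> [ks [i ->]].
case: (reachable_mutseq ks) => -[n]; rewrite /seed_at; case: (odd n) => /= -[_ S0 S1].
all: by case: (ord2P i) => ->; rewrite ?S0 ?S1; eauto.
Qed.

End Seeds.

Lemma exch_exp_periodic c d n : exch_exp c d n.+2 = exch_exp c d n.
Proof. by rewrite /exch_exp /= negbK. Qed.

Lemma exch_exp_gt0 c d : (0 < c)%N -> (0 < d)%N -> forall n, (0 < exch_exp c d n)%N.
Proof. by move=> c_gt0 d_gt0 n; rewrite /exch_exp; case: (odd n). Qed.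

Section Positivity.
Variables (x : 'I_2 -> FF) (hx : alg_indep x).
Local Notation x1 := (x ord0).
Local Notation x2 := (x ord_max).

(* All cluster variables take positive values at the point (1, 1); in particular
   none of them is zero. *)
Local Notation V11 := (frac_eval x idfun 1 1).
Let V11_spec := frac_eval_spec hx idfun 1 1.

Definition positive f := exists v, V11 f v /\ 0 < v.

Lemma positive_x1 : positive x1.
Proof. by exists 1; split; [apply: frac_eval_x1 | apply: ltr01]. Qed.

Lemma positive_x2 : positive x2.
Proof. by exists 1; split; [apply: frac_eval_x2 | apply: ltr01]. Qed.

Lemma positive_exchange f g n : positive f -> positive g -> positive (f^-1 * (g ^+ n + 1)).
Proof.
move=> [v [Vf v_gt0]] [w [Vg w_gt0]]; exists (v^-1 * (w ^+ n + 1)); split.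
  apply: (spec_mul V11_spec (spec_inv V11_spec Vf _)); first by rewrite gt_eqF.
  exact: (spec_add V11_spec (spec_exp V11_spec n Vg) (spec1 V11_spec)).
by rewrite mulr_gt0 ?invr_gt0 // addr_gt0 ?exprn_gt0.
Qed.

Lemma positive_exch_seq (e : nat -> nat) a b n :
  positive a -> positive b -> positive (exch_seq e a b n).
Proof.
move=> Pa Pb; suff P2 : positive (exch_seq e a b n) /\ positive (exch_seq e a b n.+1).
  by case: P2.
elim: n => [|n [Pn Pn1]] //; split => //.
by rewrite exch_seqSS mulrC; apply: positive_exchange.
Qed.

Lemma positive_neq0 f : positive f -> f != 0.
Proof. by move=> [v [Vf v_gt0]]; apply: (spec_neq0 V11_spec Vf); rewrite gt_eqF. Qed.

Lemma x1_neq0 : x1 != 0. Proof. exact: positive_neq0 positive_x1. Qed.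

Lemma x2_neq0 : x2 != 0. Proof. exact: positive_neq0 positive_x2. Qed.

End Positivity.

Section ClusterAlgebra.
Variables (c d : nat) (c_gt0 : (0 < c)%N) (d_gt0 : (0 < d)%N).
Variables (x : 'I_2 -> FF) (hx : alg_indep x).
Local Notation x1 := (x ord0).
Local Notation x2 := (x ord_max).
Local Notation A := (cluster_alg x (Bcd c d)).

Lemma x1'_neq0 : x1' d x != 0.
Proof. exact: (positive_neq0 hx (positive_exchange hx d (positive_x1 x) (positive_x2 x))). Qed.

Lemma fwd_neq0 n : fwd c d x n != 0.
Proof. exact: (positive_neq0 hx (positive_exch_seq hx _ _ (positive_x1 x) (positive_x2 x))). Qed.

Lemma bwd_neq0 n : bwd c d x n != 0.
Proof.
apply: (positive_neq0 hx (positive_exch_seq hx _ _ _ (positive_x2 x))).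
exact: (positive_exchange hx d (positive_x1 x) (positive_x2 x)).
Qed.

Section Defined.
Variables (K : fieldType) (iota : {rmorphism CC -> K}).
Variables (V : FF -> K -> Prop) (hV : specialization iota V).
Hypotheses (D1 : defined V x1) (D2 : defined V x2).
Hypotheses (D1' : defined V (x1' d x)) (D2' : defined V (x2' c x)).

Lemma defined_bwd n : defined V (bwd c d x n).
Proof.
apply: (defined_exchange hV bwd_neq0 _ (@exch_exp_periodic c d) (exch_exp_gt0 c_gt0 d_gt0)).
- by move=> k; apply: exch_seq_rel; apply: bwd_neq0.
- by [].
- by [].
- by rewrite bwd2 //; exact: bwd_neq0.
- rewrite bwd3; last exact: bwd_neq0.
  by rewrite mulrC; exact: D2'.
Qed.

(* Prepending [x2'] to [x1, x2, x1', ...] gives an exchange sequence whose first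
   four terms are known to be defined. *)
Lemma defined_fwd n : defined V (fwd c d x n).
Proof.
pose f k := if k is k'.+1 then fwd c d x k' else x2' c x.
have f_neq0 k : f k != 0.
  case: k => [|k]; last exact: fwd_neq0.
  exact: (positive_neq0 hx (positive_exchange hx c (positive_x2 x) (positive_x1 x))).
have f_rel k : f k * f k.+2 = f k.+1 ^+ exch_exp d c k.+1 + 1.
  case: k => [|k] /=; first by rewrite /x2' mulrC mulVKf ?(x2_neq0 hx).
  by rewrite exch_seq_rel ?fwd_neq0 // /exch_exp /=; case: (odd k).
have := defined_exchange hV f_neq0 f_rel (@exch_exp_periodic d c) (exch_exp_gt0 d_gt0 c_gt0).
by move=> /(_ D2' D1 D2); rewrite /= fwd2 => /(_ D1' n.+1).
Qed.

Lemma defined_cluster_alg y : A y -> defined V y.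
Proof.
elim=> [a | z Cz | z z' _ Dz _ Dz' | z z' _ Dz _ Dz'].
- exact: (defined_cst hV).
- have [n [->|->]] := cluster_var_exch_seq c_gt0 d_gt0 fwd_neq0 bwd_neq0 Cz.
    exact: defined_fwd.
  exact: defined_bwd.
- exact: (defined_add hV).
- exact: (defined_mul hV).
Qed.

End Defined.

End ClusterAlgebra.

(** * Rational functions without zeros or poles on the torus *)

Lemma poly_eq0_of_horner (F : numDomainType) (r : {poly F}) :
  (forall a, r.[a] = 0) -> r = 0.
Proof.
move=> r_eq0; apply/eqP/negPn/negP => r_neq0.
pose s := [seq (i%:R : F) | i <- iota 0 (size r)].
have s_roots : all (root r) s by apply/allP => _ /mapP[i _ ->]; apply/rootP.
have s_uniq : uniq s by rewrite map_inj_uniq ?iota_uniq // => i j /eqP; rewrite eqr_nat => /eqP.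
by have := max_poly_roots r_neq0 s_roots s_uniq; rewrite size_map size_iota ltnn.
Qed.

Lemma poly_eq0_off_roots (F : numDomainType) (r g : {poly F}) :
  g != 0 -> (forall a, g.[a] != 0 -> r.[a] = 0) -> r = 0.
Proof.
move=> g_neq0 r_eq0; have /eqP : r * g = 0.
  apply: poly_eq0_of_horner => a; rewrite hornerM.
  by have [-> | /r_eq0 ->] := eqVneq g.[a] 0; rewrite ?mulr0 ?mul0r.
by rewrite mulf_eq0 (negPf g_neq0) orbF => /eqP.
Qed.

Section ClosedField.
Variable F : closedFieldType.

Lemma monomial_of_roots0 (f : {poly F}) : f != 0 ->
  (forall a, a != 0 -> f.[a] != 0) -> exists c n, c != 0 /\ f = c%:P * 'X^n.
Proof.
move=> f_neq0 f_roots; have [s f_split] := closed_field_poly_normal f.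
have s0 z : z \in s -> z = 0.
  move=> z_s; apply/eqP/negPn/negP => /f_roots; rewrite f_split hornerZ horner_prod.
  by rewrite (big_rem z) //= hornerXsubC subrr mul0r mulr0 eqxx.
exists (lead_coef f), (size s); split; first by rewrite lead_coef_eq0.
rewrite {1}f_split -mul_polyC (eq_big_seq (fun=> 'X)) => [|z /s0 ->]; last by rewrite subr0.
by rewrite big_const_seq count_predT iter_mulr mulr1.
Qed.

(* [p / q] is a unit of the local ring at [b]. *)
Definition unit_at (b : F) (p q : {poly F}) :=
  exists p' q' : {poly F}, [/\ p'.[b] != 0, q'.[b] != 0 & p * q' = p' * q].

Lemma unit_at_coprimep b p q : coprimep p q -> unit_at b p q -> p.[b] != 0 /\ q.[b] != 0.
Proof.
move=> pq_coprime [p' [q' [p'b q'b /(congr1 (horner^~ b))]]]; rewrite !hornerM => e.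
have [qb0|qb] := eqVneq q.[b] 0.
  move: e; rewrite qb0 mulr0 => /eqP; rewrite mulf_eq0 (negPf q'b) orbF => /eqP pb0.
  by have := coprimep_root pq_coprime (introT rootP pb0); rewrite qb0 eqxx.
split => //; apply: contraNneq qb => pb0; move: e; rewrite pb0 mul0r => /esym/eqP.
by rewrite mulf_eq0 (negPf p'b).
Qed.

Lemma unit_at_ratio_monomial p q : p != 0 -> q != 0 ->
  (forall b, b != 0 -> unit_at b p q) ->
  exists l i j, l != 0 /\ p * 'X^i = l%:P * q * 'X^j.
Proof.
move=> p_neq0 q_neq0 pq_unit; set g := gcdp p q.
have g_neq0 : g != 0 by rewrite gcdp_eq0 negb_and p_neq0.
have p_g : p = p %/ g * g by rewrite divpK ?dvdp_gcdl.
have q_g : q = q %/ g * g by rewrite divpK ?dvdp_gcdr.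
have pq_coprime : coprimep (p %/ g) (q %/ g) by rewrite coprimep_div_gcd ?p_neq0.
have pq_unit1 b : b != 0 -> (p %/ g).[b] != 0 /\ (q %/ g).[b] != 0.
  move=> b_neq0; apply: unit_at_coprimep pq_coprime _.
  have [p' [q' [p'b q'b e]]] := pq_unit b b_neq0; exists p', q'; split => //.
  by apply: (mulIf g_neq0); rewrite mulrAC -p_g e -mulrA -q_g.
have [a [m [a_neq0 p1_mono]]] : exists a m, a != 0 /\ p %/ g = a%:P * 'X^m.
  apply: monomial_of_roots0 => [|b /pq_unit1[] //].
  by apply: contraNneq p_neq0 => p1_0; rewrite p_g p1_0 mul0r.
have [b [k [b_neq0 q1_mono]]] : exists b k, b != 0 /\ q %/ g = b%:P * 'X^k.
  apply: monomial_of_roots0 => [|z /pq_unit1[] //].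
  by apply: contraNneq q_neq0 => q1_0; rewrite q_g q1_0 mul0r.
exists (a / b), k, m; split; first by rewrite mulf_neq0 ?invr_eq0.
rewrite p_g q_g p1_mono q1_mono.
have -> : a%:P = (a / b)%:P * b%:P by rewrite -polyCM divfK.
ring.
Qed.

Lemma unit_at_lead_coef p q : p != 0 -> q != 0 ->
  (forall b, b != 0 -> unit_at b p q) ->
  p * (lead_coef q)%:P * 'X^(size q) = (lead_coef p)%:P * q * 'X^(size p).
Proof.
move=> p_neq0 q_neq0 /(unit_at_ratio_monomial p_neq0 q_neq0) [l [i [j [l_neq0 e]]]].
have lc_p : lead_coef p = l * lead_coef q.
  by have := congr1 lead_coef e; rewrite !lead_coefM !lead_coefXn lead_coefC !mulr1.
have size_pq : (i + size p = j + size q)%N.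
  have := congr1 (fun r : {poly F} => size r) e.
  by rewrite !size_mulXn // ?size_Cmul // mulf_neq0 // polyC_eq0.
apply: (mulIf (monic_neq0 (monicXn F i))).
transitivity (p * 'X^i * (lead_coef q)%:P * 'X^(size q)); first by ring.
by rewrite e lc_p polyCM -[RHS]mulrA -exprD addnC size_pq exprD; ring.
Qed.

End ClosedField.

Local Notation Y1 := ('X%:P : {poly {poly CC}}).
Local Notation Y2 := ('X : {poly {poly CC}}).

Definition slice (a : CC) : {rmorphism {poly {poly CC}} -> {poly CC}} :=
  map_poly (horner_eval a).

Lemma horner2_slice a b P : horner2 idfun a b P = (slice a P).[b].
Proof.
rewrite /= /horner_eval /=; congr horner; apply: eq_map_poly => q /=.
by rewrite map_poly_id.
Qed.

Lemma horner2_hornerC a b P : P.[b%:P].[a] = horner2 idfun a b P.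
Proof.
rewrite horner2_slice; have := horner_map (horner_eval a) P b%:P.
by rewrite /= /horner_eval /= hornerC => ->.
Qed.

Definition unit_at2 (a b : CC) (P Q : {poly {poly CC}}) := exists P' Q',
  [/\ horner2 idfun a b P' != 0, horner2 idfun a b Q' != 0 & P * Q' = P' * Q].

Section TorusUnit.
Variables (P Q : {poly {poly CC}}) (P_neq0 : P != 0) (Q_neq0 : Q != 0).
Hypothesis PQ_unit : forall a b, a != 0 -> b != 0 -> unit_at2 a b P Q.
Local Notation lP := (lead_coef P).
Local Notation lQ := (lead_coef Q).

(* For all but finitely many [a], slicing at [Y1 = a] preserves sizes and leading
   coefficients, so the univariate normal form holds slice by slice. *)
Lemma unit_at2_lead_coef : P * lQ%:P * Y2 ^+ size Q = lP%:P * Q * Y2 ^+ size P.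
Proof.
apply/eqP; rewrite -subr_eq0; apply/eqP/polyP => n; rewrite coef0.
have g_neq0 : ('X * lP * lQ : {poly CC}) != 0.
  by rewrite !mulf_neq0 ?polyX_eq0 ?lead_coef_eq0.
apply: (poly_eq0_off_roots g_neq0) => a; rewrite !hornerM hornerX !mulf_eq0 !negb_or.
case/andP => /andP[a_neq0 lPa] lQa.
have lp : lead_coef (slice a P) = lP.[a] by rewrite lead_coef_map_eq.
have lq : lead_coef (slice a Q) = lQ.[a] by rewrite lead_coef_map_eq.
have sp : size (slice a P) = size P by rewrite size_map_poly_id0.
have sq : size (slice a Q) = size Q by rewrite size_map_poly_id0.
have pq_unit b : b != 0 -> unit_at b (slice a P) (slice a Q).
  move=> b_neq0; have [P' [Q' [P'ab Q'ab e]]] := PQ_unit a_neq0 b_neq0.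
  by exists (slice a P'), (slice a Q'); rewrite -!horner2_slice -!rmorphM e.
have p_neq0 : slice a P != 0 by rewrite -lead_coef_eq0 lp.
have q_neq0 : slice a Q != 0 by rewrite -lead_coef_eq0 lq.
have := unit_at_lead_coef p_neq0 q_neq0 pq_unit; rewrite lp lq sp sq => e.
have : slice a (P * lQ%:P * Y2 ^+ size Q - lP%:P * Q * Y2 ^+ size P) = 0.
  by rewrite rmorphB !rmorphM !rmorphXn /= !map_polyC !map_polyX /= e subrr.
by move/(congr1 (fun r : {poly CC} => r`_n)); rewrite coef_map coef0.
Qed.

Lemma unit_at_lead_coef2 b : b != 0 -> unit_at b lP lQ.
Proof.
move=> b_neq0; have [P' [Q' [P'b Q'b e]]] := PQ_unit b_neq0 (oner_neq0 CC).
exists P'.[1%:P], Q'.[1%:P]; rewrite !horner2_hornerC; split => //.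
have : (P' * lQ%:P * Y2 ^+ size Q) * Q = (Q' * lP%:P * Y2 ^+ size P) * Q.
  transitivity ((P' * Q) * lQ%:P * Y2 ^+ size Q); first by ring.
  rewrite -e; transitivity (Q' * (P * lQ%:P * Y2 ^+ size Q)); first by ring.
  by rewrite unit_at2_lead_coef; ring.
move/(mulIf Q_neq0)/(congr1 (horner^~ 1%:P)); rewrite !hornerM !hornerC !hornerXn.
by rewrite polyC1 !expr1n !mulr1 => ->; rewrite mulrC.
Qed.

Lemma unit_at2_monomial : exists (l : CC) (i j i' j' : nat), l != 0 /\
  P * Y1 ^+ i * Y2 ^+ j = l%:P%:P * Q * Y1 ^+ i' * Y2 ^+ j'.
Proof.
have lP_neq0 : lP != 0 by rewrite lead_coef_eq0.
have lQ_neq0 : lQ != 0 by rewrite lead_coef_eq0.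
have [l [i [j [l_neq0 e]]]] := unit_at_ratio_monomial lP_neq0 lQ_neq0 unit_at_lead_coef2.
exists l, i, (size Q), j, (size P); split => //.
apply: (mulIf (_ : lQ%:P != 0)); first by rewrite polyC_eq0.
transitivity ((P * lQ%:P * Y2 ^+ size Q) * Y1 ^+ i); first by ring.
rewrite unit_at2_lead_coef; transitivity ((lP * 'X^i)%:P * Q * Y2 ^+ size P).
  by rewrite polyCM -rmorphXn; ring.
by rewrite e !polyCM -!rmorphXn; ring.
Qed.

End TorusUnit.

Lemma monomial_expz (F : fieldType) (k l y1 y2 : F) (i j i' j' : nat) :
  y1 != 0 -> y2 != 0 -> k * y1 ^+ i * y2 ^+ j = l * y1 ^+ i' * y2 ^+ j' ->
  k = l * y1 ^ (i'%:Z - i%:Z) * y2 ^ (j'%:Z - j%:Z).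
Proof.
move=> y1_neq0 y2_neq0 e; rewrite !expfzDr // -!invr_expz -!exprnP.
have yij_neq0 : y1 ^+ i * y2 ^+ j != 0 by rewrite mulf_neq0 ?expf_neq0.
rewrite -[k](mulfK yij_neq0) mulrA e.
by field; rewrite ?expf_neq0.
Qed.

Section TorusMonomial.
Variables (x : 'I_2 -> FF) (hx : alg_indep x).
Local Notation x1 := (x ord0).
Local Notation x2 := (x ord_max).
Local Notation Ex := (horner2 cstm x1 x2).

Lemma torus_monomial (k : FF) :
  (forall a b, a != 0 -> b != 0 -> exists2 v, frac_eval x idfun a b k v & v != 0) ->
  exists l (I J : int), l != 0 /\ k = cst l * x1 ^ I * x2 ^ J.
Proof.
move=> k_val; have [v [P [Q [Q11 kPQ v_PQ]]] v_neq0] := k_val 1 1 (oner_neq0 _) (oner_neq0 _).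
have P_neq0 : P != 0.
  by apply: contraNneq v_neq0 => P0; rewrite v_PQ P0 rmorph0 mul0r.
have Q_neq0 : Q != 0 by apply: contraNneq Q11 => ->; rewrite rmorph0.
have PQ_unit a b : a != 0 -> b != 0 -> unit_at2 a b P Q.
  move=> a_neq0 b_neq0; have [w [P' [Q' [Q'ab kPQ' w_PQ']]] w_neq0] := k_val a b a_neq0 b_neq0.
  exists P', Q'; split => //; first by apply: contraNneq w_neq0 => P'0; rewrite w_PQ' P'0 mul0r.
  apply/eqP; rewrite -subr_eq0 -(horner2x_eq0 hx) rmorphB !rmorphM -kPQ -kPQ'.
  by apply/eqP; ring.
have [l [i [j [i' [j' [l_neq0 e]]]]]] := unit_at2_monomial P_neq0 Q_neq0 PQ_unit.
exists l, (i'%:Z - i%:Z), (j'%:Z - j%:Z); split => //.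
apply: monomial_expz (x1_neq0 hx) (x2_neq0 hx) _.
apply: (mulIf (_ : Ex Q != 0)); first by rewrite horner2x_eq0.
have := congr1 Ex e; rewrite !rmorphM !rmorphXn horner2C horner2XC horner2X -kPQ cstmE => e'.
by transitivity (k * Ex Q * x1 ^+ i * x2 ^+ j); [ring | rewrite e'; ring].
Qed.

End TorusMonomial.

(** * Factorial rings *)

Section Factorial.
Variables (A : FF -> Prop) (A1 : A 1) (AM : forall a b, A a -> A b -> A (a * b)).

Definition dvdA (a b : FF) := exists2 g, A g & a * g = b.

Lemma unitA_neq0 u : unitA A u -> u != 0.
Proof.
by move=> [_ [v [_ uv1]]]; apply: contra_eq_neq uv1 => ->; rewrite mul0r eq_sym oner_neq0.
Qed.

Lemma unitA_inv u : unitA A u -> A u^-1.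
Proof.
move=> u_unit; have [_ [v [Av uv1]]] := u_unit.
by rewrite -[u^-1]mulr1 -uv1 mulKf ?unitA_neq0.
Qed.

Lemma unitAM u v : unitA A u -> unitA A v -> unitA A (u * v).
Proof.
move=> u_unit v_unit; split; first by apply: AM; [case: u_unit | case: v_unit].
exists (u^-1 * v^-1); split; first exact: (AM (unitA_inv u_unit) (unitA_inv v_unit)).
by rewrite mulrACA !mulfV ?mulr1 ?unitA_neq0.
Qed.

Lemma unitAV u : unitA A u -> unitA A u^-1.
Proof.
move=> u_unit; split; first exact: unitA_inv.
by exists u; split; [case: u_unit | rewrite mulVf ?unitA_neq0].
Qed.

Lemma irredA_unitM u k : unitA A u -> irredA A k -> irredA A (u * k).
Proof.
move=> u_unit [Ak k_neq0 k_nunit k_irr]; have u_neq0 := unitA_neq0 u_unit.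
split; first by apply: AM => //; case: u_unit.
- exact: (mulf_neq0 u_neq0 k_neq0).
- by move=> /(unitAM (unitAV u_unit)); rewrite mulKf.
move=> b c Ab Ac ukE.
have kE : k = u^-1 * b * c by rewrite -mulrA -ukE mulKf.
have [b_unit | c_unit] := k_irr _ c (AM (unitA_inv u_unit) Ab) Ac kE; last by right.
by left; move: (unitAM u_unit b_unit); rewrite mulVKf.
Qed.

Lemma assocA_dvdA k y b : assocA A k y -> dvdA y b -> dvdA k b.
Proof.
move=> [u [u_unit ->]] [g Ag yg]; exists (u^-1 * g); first exact: (AM (unitA_inv u_unit) Ag).
by rewrite mulrACA mulfV ?unitA_neq0 // mul1r.
Qed.

Lemma dvdA_mull u y b : A u -> dvdA y b -> dvdA y (u * b).
Proof. by move=> Au [g Ag yg]; exists (u * g); [apply: AM | rewrite mulrCA yg]. Qed.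

Lemma A_prod (s : seq FF) : (forall y, y \in s -> A y) -> A (\prod_(y <- s) y).
Proof.
elim: s => [|z s IHs] As; first by rewrite big_nil.
rewrite big_cons; apply: AM; first by apply: As; rewrite mem_head.
by apply: IHs => y ys; apply: As; rewrite inE ys orbT.
Qed.

Lemma dvdA_prod y (s : seq FF) : y \in s -> (forall z, z \in s -> A z) ->
  dvdA y (\prod_(z <- s) z).
Proof.
move=> ys As; exists (\prod_(z <- rem y s) z); last by rewrite (big_rem y ys).
by apply: A_prod => z /mem_rem; apply: As.
Qed.

Hypothesis fA : factorial_ring A.

Lemma factorial_decomp a : A a -> a != 0 -> exists u (s : seq FF),
  [/\ unitA A u, forall y, y \in s -> irredA A y & a = u * \prod_(y <- s) y].
Proof.
move=> Aa a_neq0; case: (Classical_Prop.classic (unitA A a)) => [a_unit | a_nunit].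
  by exists a, [::]; rewrite big_nil mulr1.
have [s [s_irr ->]] := fA.1 a Aa a_neq0 a_nunit.
exists 1, s; rewrite mul1r; split => //.
by split => //; exists 1; rewrite mulr1.
Qed.

Lemma factorial_assoc_mem k (r t : seq FF) :
  (forall y, y \in k :: r -> irredA A y) -> (forall y, y \in t -> irredA A y) ->
  \prod_(y <- k :: r) y = \prod_(y <- t) y -> exists2 y, y \in t & assocA A k y.
Proof.
move=> kr_irr t_irr e; have [t' [tt' size_t' t'_assoc]] := fA.2 _ _ kr_irr t_irr e.
exists (nth 0 t' 0); last exact: (t'_assoc 0%N).
by rewrite (perm_mem tt') mem_nth // -size_t'.
Qed.

Lemma factorial_irred_dvd a : A a -> a != 0 -> ~ unitA A a ->
  exists k, irredA A k /\ dvdA k a.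
Proof.
move=> Aa a_neq0 a_nunit; have [[|k s] [s_irr aE]] := fA.1 a Aa a_neq0 a_nunit.
  by case: a_nunit; rewrite aE big_nil; split => //; exists 1; rewrite mulr1.
exists k; split; first by apply: s_irr; rewrite mem_head.
by rewrite aE; apply: dvdA_prod (mem_head _ _) _ => y /s_irr[].
Qed.

Lemma factorial_irred_prime k b1 b2 : irredA A k -> A b1 -> A b2 ->
  b1 != 0 -> b2 != 0 -> dvdA k (b1 * b2) -> dvdA k b1 \/ dvdA k b2.
Proof.
move=> k_irr Ab1 Ab2 b1_neq0 b2_neq0 [h Ah khE].
have h_neq0 : h != 0.
  by apply: contra_eq_neq khE => ->; rewrite mulr0 eq_sym (mulf_neq0 b1_neq0 b2_neq0).
have [u1 [s1 [u1_unit s1_irr b1E]]] := factorial_decomp Ab1 b1_neq0.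
have [u2 [s2 [u2_unit s2_irr b2E]]] := factorial_decomp Ab2 b2_neq0.
have [u [r [u_unit r_irr hE]]] := factorial_decomp Ah h_neq0.
pose w := (u1 * u2)^-1 * u.
have w_unit : unitA A w by apply: unitAM (unitAV (unitAM u1_unit u2_unit)) u_unit.
have wkr_irr y : y \in w * k :: r -> irredA A y.
  by rewrite inE => /predU1P[-> | /r_irr //]; apply: irredA_unitM.
have s12_irr y : y \in s1 ++ s2 -> irredA A y.
  by rewrite mem_cat => /orP[/s1_irr | /s2_irr].
have wkr_s12 : \prod_(y <- w * k :: r) y = \prod_(y <- s1 ++ s2) y.
  rewrite big_cons big_cat /=.
  transitivity ((u1 * u2)^-1 * (k * h)); first by rewrite hE /w; ring.
  by rewrite khE b1E b2E mulrACA (mulKf (unitA_neq0 (unitAM u1_unit u2_unit))).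
have [y y_s12 wk_y] := factorial_assoc_mem wkr_irr s12_irr wkr_s12.
have k_y : assocA A k y.
  have [v [v_unit wkE]] := wk_y; exists (w^-1 * v); split; first exact: unitAM (unitAV _) _.
  by rewrite -mulrA -wkE mulKf ?unitA_neq0.
have A_irr (s : seq FF) : (forall z, z \in s -> irredA A z) -> forall z, z \in s -> A z.
  by move=> s_irr z /s_irr[].
move: y_s12; rewrite mem_cat => /orP[y_s1 | y_s2]; [left | right]; apply: assocA_dvdA k_y _.
  by rewrite b1E; apply: dvdA_mull; [case: u1_unit | apply: dvdA_prod y_s1 (A_irr _ s1_irr)].
by rewrite b2E; apply: dvdA_mull; [case: u2_unit | apply: dvdA_prod y_s2 (A_irr _ s2_irr)].
Qed.

End Factorial.

(** * Roots of X^n + 1 *)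

Section RootsXnAdd1.
Variables (F : numClosedFieldType) (n : nat) (n_gt0 : (0 < n)%N).

Lemma exists_root_Xn_add1 : exists z : F, z ^+ n = -1.
Proof.
have /closed_rootP[z /rootP] : size ('X^n + 1 : {poly F}) != 1%N.
  by rewrite -polyC1 size_XnaddC // eqSS -lt0n.
by rewrite !hornerE => /eqP; rewrite addr_eq0 => /eqP; exists z.
Qed.

Lemma root_Xn_add1_neq0 (z : F) : z ^+ n = -1 -> z != 0.
Proof. by apply: contra_eq_neq => ->; rewrite expr0n gtn_eqF // eq_sym oppr_eq0 oner_neq0. Qed.

(* The cofactor is [\sum_(i < n) X^(n-1-i) z^i], whose value at [z] is [n z^(n-1)]. *)
Lemma Xn_add1_simple_root (z : F) : z ^+ n = -1 ->
  exists q : {poly F}, [/\ 'X^n + 1 = ('X - z%:P) * q, q.[z] != 0 & q.[0] != 0].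
Proof.
move=> zn; pose q := \sum_(i < n) 'X ^+ (n.-1 - i) * z%:P ^+ i.
have qE : 'X^n + 1 = ('X - z%:P) * q by rewrite -subrXX -rmorphXn zn rmorphN1 opprK.
exists q; split => //.
  rewrite horner_sum (eq_bigr (fun=> z ^+ n.-1)) => [|i _].
    rewrite sumr_const card_ord mulrn_eq0 negb_or -lt0n n_gt0.
    exact: (expf_neq0 _ (root_Xn_add1_neq0 zn)).
  by rewrite hornerM hornerXn -rmorphXn hornerC -exprD subnK // -ltnS prednK.
apply: contra_eq_neq (congr1 (horner^~ 0) qE) => q0.
by rewrite !hornerE q0 mulr0 expr0n gtn_eqF // add0r oner_neq0.
Qed.

End RootsXnAdd1.

Lemma exists_other_root_Xn_add1 (F : numClosedFieldType) n (z : F) :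
  (1 < n)%N -> z ^+ n = -1 -> exists2 z', z' ^+ n = -1 & z' != z.
Proof.
move=> n_gt1 zn; have [q [qE qz _]] := Xn_add1_simple_root (ltnW n_gt1) zn.
have q_neq0 : q != 0 by apply: contraNneq qz => ->; rewrite horner0.
have /closed_rootP[z' /rootP qz'] : size q != 1%N.
  have := congr1 (fun p : {poly F} => size p) qE.
  rewrite -polyC1 size_XnaddC ?(ltnW n_gt1) // size_mul ?polyXsubC_eq0 // size_XsubC /= => -[nE].
  by rewrite add0n in nE; rewrite neq_ltn -nE n_gt1 orbT.
exists z'; last by apply: contraNneq qz => <-; rewrite qz'.
apply/eqP; rewrite -addr_eq0; apply/eqP.
by have := congr1 (horner^~ z') qE; rewrite !hornerE qz' mulr0.
Qed.

(** * Specializing the cluster algebra *)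

Section NonUnit.
Variables (K : fieldType) (iota : {rmorphism CC -> K}).
Variables (V : FF -> K -> Prop) (hV : specialization iota V).
Variables (A : FF -> Prop) (DA : forall y, A y -> defined V y).

Lemma spec0_not_unitA y : V y 0 -> ~ unitA A y.
Proof.
move=> Vy [_ [z [Az yz1]]]; have [w Vz] := DA Az.
have := spec_mul hV Vy Vz; rewrite yz1 mul0r => /(spec_fun hV (spec1 hV))/eqP.
by rewrite oner_eq0.
Qed.

Lemma spec_dvdA_neq0 k y v : A k -> dvdA A k y -> V y v -> v != 0 ->
  exists2 vk, V k vk & vk != 0.
Proof.
move=> Ak [g Ag kgy] Vy v_neq0; have [vk Vk] := DA Ak; have [vg Vg] := DA Ag.
exists vk => //; apply: contraNneq v_neq0 => vk0.
have -> : v = vk * vg by apply: (spec_fun hV Vy); rewrite -kgy; exact: (spec_mul hV Vk Vg).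
by rewrite vk0 mul0r.
Qed.

End NonUnit.

Section Curves.
Variables (c d : nat) (c_gt0 : (0 < c)%N) (d_gt0 : (0 < d)%N).
Variables (x : 'I_2 -> FF) (hx : alg_indep x).
Local Notation x1 := (x ord0).
Local Notation x2 := (x ord_max).
Local Notation A := (cluster_alg x (Bcd c d)).

(* Evaluation along the rational curve [t |-> (p1 t, p2 t)], then at [t = z]. *)
Definition curve_spec (p1 p2 : {poly CC}) (z : CC) :=
  spec_at (frac_eval x polyK (tofrac p1) (tofrac p2)) z.

Lemma curve_spec_spec p1 p2 z : specialization idfun (curve_spec p1 p2 z).
Proof. exact: (spec_at_spec (frac_eval_spec hx polyK _ _) z). Qed.

Lemma curve_spec_x1 p1 p2 z : curve_spec p1 p2 z x1 p1.[z].
Proof. by exists (tofrac p1); split; [exact: frac_eval_x1 | exact: ratf_eval_tofrac]. Qed.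

Lemma curve_spec_x2 p1 p2 z : curve_spec p1 p2 z x2 p2.[z].
Proof. by exists (tofrac p2); split; [exact: frac_eval_x2 | exact: ratf_eval_tofrac]. Qed.

Lemma tofrac_Xn_add1 n : tofrac ('X^n + 1 : {poly CC}) = tofrac 'X ^+ n + 1.
Proof. by rewrite tofracD tofracXn tofrac1. Qed.

Lemma tofrac_Xn_add1_neq0 n : (0 < n)%N -> tofrac ('X^n + 1 : {poly CC}) != 0.
Proof. by move=> n_gt0; rewrite tofrac_eq0 -size_poly_eq0 -polyC1 size_XnaddC. Qed.

Lemma curve_spec_x1' z : curve_spec ('X^d + 1) 'X z (x1' d x) 1.
Proof.
exists 1; split; last by have := ratf_eval_tofrac z 1; rewrite tofrac1 hornerC.
apply: (spec_exchange1 (frac_eval_spec hx polyK _ _)) (frac_eval_x2 _ _ _ _) _.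
  by rewrite -tofrac_Xn_add1; exact: frac_eval_x1.
by rewrite -tofrac_Xn_add1; exact: tofrac_Xn_add1_neq0.
Qed.

Lemma curve_spec_x2' z : curve_spec 'X ('X^c + 1) z (x2' c x) 1.
Proof.
exists 1; split; last by have := ratf_eval_tofrac z 1; rewrite tofrac1 hornerC.
apply: (spec_exchange1 (frac_eval_spec hx polyK _ _)) (frac_eval_x1 _ _ _ _) _.
  by rewrite -tofrac_Xn_add1; exact: frac_eval_x2.
by rewrite -tofrac_Xn_add1; exact: tofrac_Xn_add1_neq0.
Qed.

Lemma defined_point a b y : a != 0 -> b != 0 -> A y -> defined (frac_eval x idfun a b) y.
Proof.
move=> a_neq0 b_neq0; have hV := frac_eval_spec hx idfun a b.
have Va := frac_eval_x1 x idfun a b; have Vb := frac_eval_x2 x idfun a b.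
apply: (defined_cluster_alg c_gt0 d_gt0 hx hV); [by exists a | by exists b | |].
  apply: (defined_mul hV (defined_inv hV Va a_neq0)).
  exact: (defined_add hV (defined_exp hV d (ex_intro _ _ Vb)) (defined1 hV)).
apply: (defined_mul hV (defined_inv hV Vb b_neq0)).
exact: (defined_add hV (defined_exp hV c (ex_intro _ _ Va)) (defined1 hV)).
Qed.

Lemma defined_curve_d z y : z ^+ d = -1 -> A y -> defined (curve_spec ('X^d + 1) 'X z) y.
Proof.
move=> zd; have hV := curve_spec_spec ('X^d + 1) 'X z.
have Vx1 := curve_spec_x1 ('X^d + 1) 'X z; have Vx2 := curve_spec_x2 ('X^d + 1) 'X z.
rewrite hornerX in Vx2.
apply: (defined_cluster_alg c_gt0 d_gt0 hx hV); [by exists ('X^d + 1).[z] | by exists z | |].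
  by exists 1; apply: curve_spec_x1'.
apply: (defined_mul hV (defined_inv hV Vx2 (root_Xn_add1_neq0 d_gt0 zd))).
exact: (defined_add hV (defined_exp hV c (ex_intro _ _ Vx1)) (defined1 hV)).
Qed.

Lemma defined_curve_c z y : z ^+ c = -1 -> A y -> defined (curve_spec 'X ('X^c + 1) z) y.
Proof.
move=> zc; have hV := curve_spec_spec 'X ('X^c + 1) z.
have Vx1 := curve_spec_x1 'X ('X^c + 1) z; have Vx2 := curve_spec_x2 'X ('X^c + 1) z.
rewrite hornerX in Vx1.
apply: (defined_cluster_alg c_gt0 d_gt0 hx hV); [by exists z | by exists ('X^c + 1).[z] | |].
  apply: (defined_mul hV (defined_inv hV Vx1 (root_Xn_add1_neq0 c_gt0 zc))).
  exact: (defined_add hV (defined_exp hV d (ex_intro _ _ Vx2)) (defined1 hV)).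
by exists 1; apply: curve_spec_x2'.
Qed.

End Curves.

Section ClusterAlgebraElements.
Variables (c d : nat) (x : 'I_2 -> FF).
Local Notation x1 := (x ord0).
Local Notation x2 := (x ord_max).
Local Notation A := (cluster_alg x (Bcd c d)).

Lemma cluster_alg1 : A 1. Proof. by rewrite -(rmorph1 cstm); apply: ga_cst. Qed.

Lemma cluster_alg_x1 : A x1. Proof. by apply: ga_gen; exists [::], ord0. Qed.

Lemma cluster_alg_x1' : (0 < d)%N -> A (x1' d x).
Proof.
by move=> d_gt0; apply: ga_gen; exists [:: ord0], ord0; rewrite /= (mut_cl_Bsign0 c d_gt0 x true).
Qed.

Lemma cluster_alg_horner (p : {poly CC}) : A (map_poly cstm p).[x2].
Proof.
elim/poly_ind: p => [|p a IHp]; first by rewrite rmorph0 horner0 -(rmorph0 cstm); apply: ga_cst.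
rewrite rmorphD rmorphM /= map_polyX map_polyC !hornerE.
apply: ga_add (ga_cst _ _); apply: ga_mul IHp _.
by apply: ga_gen; exists [::], ord_max.
Qed.

Lemma cst_unitA l : l != 0 -> unitA A (cst l).
Proof.
move=> l_neq0; split; first exact: ga_cst.
by exists (cst l^-1); split; [apply: ga_cst | rewrite -!cstmE -rmorphM mulfV ?rmorph1].
Qed.

End ClusterAlgebraElements.

Section Constant.
Variables (c d : nat) (c_gt0 : (0 < c)%N) (d_gt0 : (0 < d)%N).
Variables (x : 'I_2 -> FF) (hx : alg_indep x).
Local Notation x1 := (x ord0).
Local Notation x2 := (x ord_max).
Local Notation A := (cluster_alg x (Bcd c d)).

Lemma dvdA_x1_monomial k : A k -> dvdA A k x1 ->
  exists l (I J : int), l != 0 /\ k = cst l * x1 ^ I * x2 ^ J.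
Proof.
move=> Ak k_x1; apply: (torus_monomial hx) => a b a_neq0 b_neq0.
have hV := frac_eval_spec hx idfun a b.
exact: (spec_dvdA_neq0 hV (fun y => defined_point c_gt0 d_gt0 hx a_neq0 b_neq0)
         Ak k_x1 (frac_eval_x1 x idfun a b) a_neq0).
Qed.

Lemma dvdA_horner_exp_x1 k (p : {poly CC}) z l I J :
  A k -> dvdA A k (map_poly cstm p).[x2] -> z ^+ d = -1 -> p.[z] != 0 -> l != 0 ->
  k = cst l * x1 ^ I * x2 ^ J -> I = 0.
Proof.
move=> Ak k_p zd pz l_neq0 kE; have hV := curve_spec_spec hx ('X^d + 1) 'X z.
have Vx1 := curve_spec_x1 x ('X^d + 1) 'X z; have Vx2 := curve_spec_x2 x ('X^d + 1) 'X z.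
rewrite hornerX in Vx2; rewrite !hornerE zd addNr in Vx1.
have Vp := spec_horner hV p Vx2; rewrite map_poly_id // in Vp.
have [vk Vk vk_neq0] :=
  spec_dvdA_neq0 hV (fun y => defined_curve_d c_gt0 d_gt0 hx zd) Ak k_p Vp pz.
exact: (spec_monomial_exp0 hV Vk vk_neq0 Vx1 (x1_neq0 hx) Vx2
          (root_Xn_add1_neq0 d_gt0 zd) l_neq0 kE).
Qed.

Lemma dvdA_horner_exp_x2 k (p : {poly CC}) l I J :
  A k -> dvdA A k (map_poly cstm p).[x2] -> p.[0] != 0 -> l != 0 ->
  k = cst l * x1 ^ I * x2 ^ J -> J = 0.
Proof.
move=> Ak k_p p0 l_neq0 kE; have [z zc] := exists_root_Xn_add1 CC c_gt0.
have hV := curve_spec_spec hx 'X ('X^c + 1) z.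
have Vx1 := curve_spec_x1 x 'X ('X^c + 1) z; have Vx2 := curve_spec_x2 x 'X ('X^c + 1) z.
rewrite hornerX in Vx1; rewrite !hornerE zc addNr in Vx2.
have Vp := spec_horner hV p Vx2; rewrite map_poly_id // in Vp.
have [vk Vk vk_neq0] :=
  spec_dvdA_neq0 hV (fun y => defined_curve_c c_gt0 d_gt0 hx zc) Ak k_p Vp p0.
apply: (spec_monomial_exp0 hV Vk vk_neq0 Vx2 (x2_neq0 hx) Vx1
          (root_Xn_add1_neq0 c_gt0 zc) l_neq0).
by rewrite kE mulrAC.
Qed.

Lemma dvdA_x1_horner_cst k (p : {poly CC}) z :
  A k -> dvdA A k x1 -> dvdA A k (map_poly cstm p).[x2] ->
  z ^+ d = -1 -> p.[z] != 0 -> p.[0] != 0 -> exists2 l, l != 0 & k = cst l.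
Proof.
move=> Ak k_x1 k_p zd pz p0; have [l [I [J [l_neq0 kE]]]] := dvdA_x1_monomial Ak k_x1.
have I0 := dvdA_horner_exp_x1 Ak k_p zd pz l_neq0 kE.
have J0 := dvdA_horner_exp_x2 Ak k_p p0 l_neq0 kE.
by exists l; rewrite // kE I0 J0 !expr0z !mulr1.
Qed.

Lemma x1_not_unitA : ~ unitA A x1.
Proof.
have [z zd] := exists_root_Xn_add1 CC d_gt0.
have hV := curve_spec_spec hx ('X^d + 1) 'X z.
apply: (spec0_not_unitA hV (fun y => defined_curve_d c_gt0 d_gt0 hx zd)).
by have := curve_spec_x1 x ('X^d + 1) 'X z; rewrite !hornerE zd addNr.
Qed.

Lemma horner_x2_factor (p1 p2 : {poly CC}) : 'X^d + 1 = p1 * p2 ->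
  (map_poly cstm p1).[x2] * (map_poly cstm p2).[x2] = x1 * x1' d x.
Proof.
move=> p12; rewrite -hornerM -rmorphM -p12 rmorphD rmorphXn rmorph1 /= map_polyX.
by rewrite hornerD hornerXn hornerC /x1' (mulVKf (x1_neq0 hx)).
Qed.

End Constant.

(* [x1 x1' = x2^d + 1 = (x2 - z0) q(x2)] with [z0] a simple root of [X^d + 1]; an
   irreducible factor of [x1] is prime, so it divides one of the two factors. *)
Lemma factorial_irred_dvd_x1_cst (c d : nat) (x : 'I_2 -> FF) k :
  (0 < c)%N -> (1 < d)%N -> alg_indep x ->
  factorial_ring (cluster_alg x (Bcd c d)) -> irredA (cluster_alg x (Bcd c d)) k ->
  dvdA (cluster_alg x (Bcd c d)) k (x ord0) -> exists2 l, l != 0 & k = cst l.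
Proof.
move=> c_gt0 d_gt1 hx fA k_irr k_x1; have d_gt0 := ltnW d_gt1; have [Ak _ _ _] := k_irr.
have AM := @ga_mul (cluster_var x (Bcd c d)).
have [z0 z0d] := exists_root_Xn_add1 CC d_gt0.
have [q [qE qz0 q0]] := Xn_add1_simple_root d_gt0 z0d.
have [z1 z1d z1_z0] := exists_other_root_Xn_add1 d_gt1 z0d.
have b12 := horner_x2_factor hx qE.
have [b1_neq0 b2_neq0] : (map_poly cstm ('X - z0%:P)).[x ord_max] != 0 /\
    (map_poly cstm q).[x ord_max] != 0.
  apply/andP; rewrite -negb_or -mulf_eq0 b12.
  exact: (mulf_neq0 (x1_neq0 hx) (x1'_neq0 d hx)).
have k_b12 : dvdA (cluster_alg x (Bcd c d)) k
    ((map_poly cstm ('X - z0%:P)).[x ord_max] * (map_poly cstm q).[x ord_max]).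
  by rewrite b12 mulrC; exact: (dvdA_mull AM (cluster_alg_x1' c x d_gt0) k_x1).
have [k_b1 | k_b2] := factorial_irred_prime (cluster_alg1 c d x) AM fA k_irr
  (cluster_alg_horner c d x _) (cluster_alg_horner c d x _) b1_neq0 b2_neq0 k_b12.
  apply: (dvdA_x1_horner_cst c_gt0 d_gt0 hx Ak k_x1 k_b1 z1d); rewrite hornerXsubC.
    by rewrite subr_eq0.
  by rewrite sub0r oppr_eq0 (root_Xn_add1_neq0 d_gt0 z0d).
exact: (dvdA_x1_horner_cst c_gt0 d_gt0 hx Ak k_x1 k_b2 z0d qz0 q0).
Qed.

Theorem corollary6p4 (c d : nat) (hc : (1 <= c)%N) (hd : (2 <= d)%N)
  (x : 'I_2 -> FF) (hx : alg_indep x) :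
  ~ factorial_ring (cluster_alg x (Bcd c d)).
Proof.
move=> fA; have d_gt0 := ltnW hd.
have [k [k_irr k_x1]] := factorial_irred_dvd (cluster_alg1 c d x) (@ga_mul _)
  fA (cluster_alg_x1 c d x) (x1_neq0 hx) (x1_not_unitA hc d_gt0 hx).
have [l l_neq0 kE] := factorial_irred_dvd_x1_cst hc hd hx fA k_irr k_x1.
by case: k_irr => _ _ k_nunit _; apply: k_nunit; rewrite kE; exact: cst_unitA.
Qed.
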